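(* Assume $X$ satisfies the $G$-latent model with covariance $\Sigma=ACA^t+\Gamma$. (i) If $\Delta(C)>\frac{2}{m}|\Gamma|_V$, then $B^*$ is the unique maximizer of $B\mapsto\langle\Sigma,B\rangle$ over $\mathcal{C}$. (ii) If $\Delta(C)>0$, then $B^*$ is the unique maximizer of $B\mapsto\langle\Sigma-\Gamma,B\rangle$ over $\mathcal{C}$.
   Context: Let $G=\{G_1,\dots,G_K\}$ be a partition of $[p]$ into nonempty groups, $k(a)$ the index with $a\in G_{k(a)}$, $m=\min_k|G_k|$. A centered random vector $X$ satisfies the $G$-latent model if $X_a=Z_{k(a)}+E_a$ for all $a$, where $Z\in\mathbb{R}^K$ is centered, $E\in\mathbb{R}^p$ is centered, independent of $Z$, with independent coordinates and $\mathrm{Var}(E_a)=\gamma_{k(a)}$. Then $\Sigma=\mathrm{Cov}(X)=ACA^t+\Gamma$ with $A_{ak}=1_{\{a\in G_k\}}$, $C=\mathrm{Cov}(Z)$, $\Gamma=\mathrm{diag}(\gamma_{k(a)})_a$. $\Delta(C)=\min_{j<k}(C_{jj}+C_{kk}-2C_{jk})$. For diagonal $D$, $|D|_V=\max_aD_{aa}-\min_aD_{aa}$. $B^*$ is the $p\times p$ matrix with $B^*_{ab}=1/|G_k|$ if $a,b\in G_k$ for some $k$, and $0$ otherwise. $\langle M,N\rangle=\mathrm{tr}(M^tN)$. $\mathcal{C}$ is the set of symmetric positive semidefinite $p\times p$ matrices $B$ with $\sum_aB_{ab}=1$ for all $b$, $B_{ab}\ge0$ for all $a,b$, and $\mathrm{tr}(B)=K$.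 *)

From HB Require Import structures.
From mathcomp Require Import all_boot all_order all_algebra.
Set Implicit Arguments. Unset Strict Implicit. Unset Printing Implicit Defensive.
Import Order.TTheory GRing.Theory Num.Theory.
Local Open Scope ring_scope.

(* The partition G of [p] into K groups is encoded by the group-index map
   k : 'I_p -> 'I_K (a is in G_{k a}); groups nonempty = k surjective. *)
Definition group_of (p K : nat) (k : 'I_p -> 'I_K) (j : 'I_K) : {set 'I_p} :=
  [set a | k a == j].

Definition nonempty_groups (p K : nat) (k : 'I_p -> 'I_K) : Prop :=
  forall j : 'I_K, exists a : 'I_p, k a = j.

(* m = min_k |G_k| (the default p is irrelevant when K >= 1, since |G_k| <= p) *)
Definition min_group_size (p K : nat) (k : 'I_p -> 'I_K) : nat :=
  \big[minn/p]_(j < K) #|group_of k j|.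

Definition memb_mx (R : nzRingType) (p K : nat) (k : 'I_p -> 'I_K) : 'M[R]_(p, K) :=
  \matrix_(a, j) (k a == j)%:R.

Definition Gamma_mx (R : nzRingType) (p K : nat) (k : 'I_p -> 'I_K)
  (gamma : 'I_K -> R) : 'M[R]_p :=
  diag_mx (\row_a gamma (k a)).

Definition Sigma_mx (R : nzRingType) (p K : nat) (k : 'I_p -> 'I_K)
  (C : 'M[R]_K) (gamma : 'I_K -> R) : 'M[R]_p :=
  memb_mx R k *m C *m (memb_mx R k)^T + Gamma_mx k gamma.

Definition Bstar (R : fieldType) (p K : nat) (k : 'I_p -> 'I_K) : 'M[R]_p :=
  \matrix_(a, b) (if k a == k b then (#|group_of k (k a)|%:R)^-1 else 0).

Definition diag_var (R : realDomainType) (p : nat) (D : 'M[R]_p) : R :=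
  let s := [seq D a a | a <- enum 'I_p] in
  \big[Num.max/head 0 s]_(x <- s) x - \big[Num.min/head 0 s]_(x <- s) x.

Definition frob (R : nzRingType) (p : nat) (M N : 'M[R]_p) : R := \tr (M^T *m N).

Definition sym_psd (R : numDomainType) (n : nat) (M : 'M[R]_n) : Prop :=
  M^T = M /\ forall x : 'cV[R]_n, 0 <= (x^T *m M *m x) 0 0.

Definition Cset (R : numDomainType) (p K : nat) (B : 'M[R]_p) : Prop :=
  [/\ sym_psd B,
      (forall b : 'I_p, \sum_(a < p) B a b = 1),
      (forall a b : 'I_p, 0 <= B a b) &
      \tr B = K%:R].

Definition unique_maximizer (R : numDomainType) (p K : nat) (S B0 : 'M[R]_p) : Prop :=
  Cset K B0 /\ forall B, Cset K B -> B <> B0 -> frob S B < frob S B0.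

(* Delta(C) > t, with Delta(C) = min_{j<k} (C_jj + C_kk - 2 C_jk)
   (vacuous when K = 1, i.e. min over the empty set = +infinity) *)
Definition Delta_gt (R : numDomainType) (K : nat) (C : 'M[R]_K) (t : R) : Prop :=
  forall j l : 'I_K, (j < l)%N -> t < C j j + C l l - 2 * C j l.

(* For B in the constraint set, let o_a be the mass that row a puts outside the
   group of a, and u_a = sum_(b in G_k(a)) (B_aa + B_bb - 2 B_ab) / 2 >= 0 (by
   positive semidefiniteness) its spread inside that group.  Symmetrising,
   <A C A^t, B* - B> = sum_(k(a) <> k(b)) (C_jj + C_ll - 2 C_jl) / 2 * B_ab,
   while the unit row sums give, group by group,
   sum_(a in G_j) (1/|G_j| - B_aa) = sum_(a in G_j) (o_a - u_a) / |G_j|.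
   As B and B* both have trace K, the Gamma-term may be centred at any constant,
   and it is then at least -(|Gamma|_V / m) sum_a o_a.  Hence <Sigma, B* - B> is
   at least sum_(k(a) <> k(b)) (Delta(C) / 2 - |Gamma|_V / m) B_ab > 0 unless B is
   block diagonal; a block-diagonal B in the constraint set has zero spread, which
   forces B = B*. *)

From HB Require Import structures.
From mathcomp Require Import all_boot all_order all_algebra.
From mathcomp Require Import ring lra.
Import Order.TTheory GRing.Theory Num.Theory.
Local Open Scope ring_scope.
Set Implicit Arguments. Unset Strict Implicit.

Lemma sum_delta_l (R : pzSemiRingType) n (a : 'I_n) (F : 'I_n -> R) :
  \sum_i (i == a)%:R * F i = F a.
Proof.
by rewrite (bigD1 a) //= eqxx mul1r big1 ?addr0 // => i /negbTE ->; rewrite mul0r.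
Qed.

Lemma sum_delta_r (R : pzSemiRingType) n (a : 'I_n) (F : 'I_n -> R) :
  \sum_i F i * (i == a)%:R = F a.
Proof.
by rewrite (bigD1 a) //= eqxx mulr1 big1 ?addr0 // => i /negbTE ->; rewrite mulr0.
Qed.

Lemma frobE (R : nzRingType) p (S B : 'M[R]_p) :
  frob S B = \sum_a \sum_b S a b * B a b.
Proof.
rewrite /frob /mxtrace exchange_big; apply: eq_bigr => b _.
by rewrite mxE; apply: eq_bigr => a _; rewrite mxE.
Qed.

Lemma psd_midpoint (R : realDomainType) p (B : 'M[R]_p) :
  sym_psd B -> forall a b, 2 * B a b <= B a a + B b b.
Proof.
move=> [B_sym B_psd] a b.
have quadE i j : ((delta_mx 0 i : 'rV_p) *m B *m (delta_mx j 0 : 'cV_p)) 0 0 = B i j.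
  by rewrite -colE -rowE !mxE.
have subE (M N : 'M[R]_1) : (M - N) 0 0 = M 0 0 - N 0 0 by rewrite !mxE.
have := B_psd (delta_mx a 0 - delta_mx b 0).
rewrite !linearB /= !trmx_delta !mulmxBl !subE !quadE.
have -> : B b a = B a b by rewrite -{1}B_sym mxE.
lra.
Qed.

Lemma card_group_of_gt0 p K (k : 'I_p -> 'I_K) a : (0 < #|group_of k (k a)|)%N.
Proof. by apply/card_gt0P; exists a; rewrite inE. Qed.

Lemma min_group_size_bounds p K (k : 'I_p -> 'I_K) :
  nonempty_groups k -> forall a, (0 < min_group_size k <= #|group_of k (k a)|)%N.
Proof.
move=> k_onto a; apply/andP; split; last exact: (bigmin_le p (k a) (fun j => #|group_of k j|)).
apply: (big_ind (fun n => 0 < n)%N) => [|m n m_gt0 n_gt0|j _].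
- by case: p k k_onto a => [|p'] ? ? [].
- by rewrite leq_min m_gt0.
- by have [a' <-] := k_onto j; apply: card_group_of_gt0.
Qed.

Lemma diag_var_bounds (R : realDomainType) p (D : 'M[R]_p) :
  exists c, forall a, D a a <= c <= D a a + diag_var D.
Proof.
rewrite /diag_var; set s := [seq _ | _ <- _]; set x0 := head 0 s.
exists (\big[Num.max/x0]_(x <- s) x) => a.
have Ds : D a a \in s by apply/mapP; exists a; rewrite ?mem_enum.
have := le_bigmax_seq x0 _ predT id Ds isT; have := ge_bigmin_seq x0 _ predT id Ds isT.
rewrite /=; lra.
Qed.

Section Groups.
Variables (R : nzRingType) (p K : nat) (k : 'I_p -> 'I_K).

Lemma sum_group_const (x : R) j : \sum_(a | k a == j) x = x * #|group_of k j|%:R.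
Proof. by rewrite sumr_const /group_of cardsE mulr_natr. Qed.

Lemma sum_by_group (h : 'I_K -> R) (y z : 'I_p -> R) :
  (forall j, \sum_(a | k a == j) y a = \sum_(a | k a == j) z a) ->
  \sum_a h (k a) * y a = \sum_a h (k a) * z a.
Proof.
move=> yz; rewrite (partition_big k predT) // [RHS](partition_big k predT) //.
apply: eq_bigr => j _.
rewrite (eq_bigr (fun a => h j * y a)) => [|a /eqP -> //].
by rewrite -mulr_sumr yz mulr_sumr; apply: eq_bigr => a /eqP ->.
Qed.

Lemma memb_mx_conjE (C : 'M[R]_K) a b :
  (memb_mx R k *m C *m (memb_mx R k)^T) a b = C (k a) (k b).
Proof.
rewrite mxE -[RHS]sum_delta_r; apply: eq_bigr => j _.
rewrite !mxE eq_sym -(sum_delta_l (k a) (C^~ j)); congr (_ * _).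
by apply: eq_bigr => l _; rewrite mxE eq_sym.
Qed.

Lemma Gamma_mx_diag (gamma : 'I_K -> R) a : Gamma_mx k gamma a a = gamma (k a).
Proof. by rewrite !mxE eqxx mulr1n. Qed.

Lemma frob_Sigma (C : 'M[R]_K) (gamma : 'I_K -> R) (B : 'M[R]_p) :
  frob (Sigma_mx k C gamma) B =
  \sum_a \sum_b C (k a) (k b) * B a b + \sum_a gamma (k a) * B a a.
Proof.
rewrite frobE -big_split /=; apply: eq_bigr => a _.
rewrite -(sum_delta_l a (fun b => gamma (k a) * B a b)) -big_split /=.
apply: eq_bigr => b _.
rewrite /Sigma_mx [(_ + _ : 'M_p) a b]mxE memb_mx_conjE !mxE mulrDl eq_sym.
by rewrite -mulr_natl mulrA mulr1 mulr_natl.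
Qed.

Lemma Sigma_subGamma (C : 'M[R]_K) (gamma : 'I_K -> R) :
  Sigma_mx k C gamma - Gamma_mx k gamma = Sigma_mx k C (fun _ => 0).
Proof.
rewrite /Sigma_mx addrK [Gamma_mx k _](_ : _ = 0) ?addr0 //.
by apply/matrixP => a b; rewrite !mxE mul0rn.
Qed.

End Groups.

Section GroupSizes.
Variables (R : numFieldType) (p K : nat) (k : 'I_p -> 'I_K).

Definition group_size a : R := #|group_of k (k a)|%:R.

Lemma group_size_gt0 a : 0 < group_size a.
Proof. by rewrite ltr0n card_group_of_gt0. Qed.

Lemma group_size_neq0 a : group_size a != 0.
Proof. exact/lt0r_neq0/group_size_gt0. Qed.

Lemma sum_inv_group_size : nonempty_groups k -> \sum_a (group_size a)^-1 = K%:R.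
Proof.
move=> k_onto; rewrite (partition_big k predT) // -[K in K%:R]card_ord -sumr_const.
apply: eq_bigr => j _; have [a0 <-] := k_onto j.
rewrite (eq_bigl (fun a => k a == k a0)) // (eq_bigr (fun _ => (group_size a0)^-1)).
  by rewrite sum_group_const mulVf ?group_size_neq0.
by move=> a /eqP; rewrite /group_size => ->.
Qed.

Section RowStochastic.
Variable B : 'M[R]_p.
Hypothesis B_row_sum : forall a, \sum_b B a b = 1.

Definition off_group_mass a := \sum_(b | k b != k a) B a b.
Definition in_group_spread a :=
  \sum_(b | k b == k a) (B a a + B b b - 2 * B a b) / 2.

Lemma off_group_mass_block_diag :
  (forall a b, k a != k b -> B a b = 0) -> forall a, off_group_mass a = 0.
Proof. by move=> B_block a; apply: big1 => b ba; rewrite B_block // eq_sym. Qed.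

Lemma in_group_spreadE a :
  in_group_spread a =
  (group_size a * B a a + \sum_(b | k b == k a) B b b) / 2 - 1 + off_group_mass a.
Proof.
have in_row : \sum_(b | k b == k a) B a b = 1 - off_group_mass a.
  by rewrite -(B_row_sum a) [in RHS](bigID (fun b => k b == k a)) addrK.
rewrite /in_group_spread -mulr_suml sumrB big_split /= -mulr_sumr in_row.
by rewrite sum_group_const /group_size; field.
Qed.

Lemma group_deficitE j :
  \sum_(a | k a == j) ((group_size a)^-1 - B a a) =
  \sum_(a | k a == j) (off_group_mass a - in_group_spread a) / group_size a.
Proof.
have [a0 /eqP <- | empty] := pickP (fun a => k a == j); last first.
  by rewrite !big_pred0.
set n := group_size a0; set T := \sum_(b | k b == k a0) B b b.
have n_a a : k a == k a0 -> group_size a = n by rewrite /group_size => /eqP ->.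
rewrite (eq_bigr (fun a => n^-1 - B a a)) => [|a /n_a -> //].
rewrite [in RHS](eq_bigr (fun a => (1 - (n * B a a + T) / 2) / n)); last first.
  move=> a a_j; rewrite in_group_spreadE n_a //.
  by rewrite /T (eq_bigl (fun b => k b == k a0)) => [|b]; [ring | rewrite (eqP a_j)].
rewrite -mulr_suml !sumrB -mulr_suml big_split /= -mulr_sumr !sum_group_const -/T.
have : n != 0 := group_size_neq0 a0.
by rewrite /n /group_size; move: (_%:R) => x x0; field.
Qed.

Lemma deficit_by_group (h : 'I_K -> R) :
  \sum_a h (k a) * ((group_size a)^-1 - B a a) =
  \sum_a h (k a) * ((off_group_mass a - in_group_spread a) / group_size a).
Proof. exact/sum_by_group/group_deficitE. Qed.

End RowStochastic.

Lemma BstarE a b : Bstar R k a b = if k a == k b then (group_size a)^-1 else 0.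
Proof. by rewrite mxE. Qed.

Lemma Bstar_sym : (Bstar R k)^T = Bstar R k.
Proof.
apply/matrixP => a b; rewrite mxE !BstarE eq_sym.
by case: eqP => // ab; rewrite /group_size ab.
Qed.

Lemma sum_Bstar_row (f : 'I_K -> R) a : \sum_b f (k b) * Bstar R k a b = f (k a).
Proof.
rewrite (bigID (fun b => k b == k a)) /= [X in _ + X]big1 => [|b /negbTE]; last first.
  by rewrite BstarE eq_sym => ->; rewrite mulr0.
rewrite (eq_bigr (fun _ => f (k a) * (group_size a)^-1)) => [|b /eqP ab].
  by rewrite sum_group_const addr0 mulfVK ?group_size_neq0.
by rewrite BstarE ab eqxx.
Qed.

End GroupSizes.

Section Bstar.
Variables (R : realFieldType) (p K : nat) (k : 'I_p -> 'I_K).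

(* The quadratic form of [Bstar] is the sum over groups of (group sum of x)^2 / group size. *)
Lemma Bstar_psd : sym_psd (Bstar R k).
Proof.
split=> [|x]; first exact: Bstar_sym.
pose s j := \sum_(a | k a == j) x a 0.
have Bx b : (x^T *m Bstar R k) 0 b = s (k b) / group_size R k b.
  rewrite mxE (bigID (fun a => k a == k b)) /= [X in _ + X]big1 => [|a /negbTE]; last first.
    by rewrite BstarE => ->; rewrite mulr0.
  rewrite /s addr0 mulr_suml; apply: eq_bigr => a /eqP ab.
  by rewrite mxE BstarE ab eqxx /group_size ab.
rewrite mxE (eq_bigr (fun b => s (k b) / group_size R k b * x b 0)) => [|b _]; last first.
  by rewrite Bx.
rewrite (partition_big k predT) //=; apply: sumr_ge0 => j _.
rewrite (eq_bigr (fun b => s j / #|group_of k j|%:R * x b 0)) => [|b /eqP <- //].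
by rewrite -mulr_sumr mulrAC -expr2 mulr_ge0 ?invr_ge0 ?sqr_ge0.
Qed.

Lemma Bstar_in_Cset : nonempty_groups k -> Cset K (Bstar R k).
Proof.
move=> k_onto; split.
- exact: Bstar_psd.
- move=> b; rewrite -(sum_Bstar_row k (fun _ => 1) b).
  by apply: eq_bigr => a _; rewrite mul1r -[in LHS]Bstar_sym mxE.
- by move=> a b; rewrite BstarE; case: ifP; rewrite ?invr_ge0 ?ler0n.
- rewrite -(sum_inv_group_size R k_onto); apply: eq_bigr => a _.
  by rewrite BstarE eqxx.
Qed.

End Bstar.

Definition cdist (R : nzRingType) K (C : 'M[R]_K) j l := C j j + C l l - 2 * C j l.

Lemma gap_term_bound (R : realFieldType) (d w n o u : R) :
  0 <= o -> 0 <= u -> 0 < n -> 0 <= d <= w * n -> - (w * o) <= - d * ((o - u) / n).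
Proof.
move=> o_ge0 u_ge0 n_gt0 /andP[d_ge0 d_le].
rewrite mulrA ler_pdivlMr // mulNr -mulrA (mulrC o) mulrA; nra.
Qed.

Section Admissible.
Variables (R : realFieldType) (p K : nat) (k : 'I_p -> 'I_K) (B : 'M[R]_p).
Hypothesis B_in : Cset K B.

Lemma Cset_sym a b : B a b = B b a.
Proof. by case: B_in => [[B_sym _] _ _ _]; rewrite -{1}B_sym mxE. Qed.

Lemma Cset_row_sum a : \sum_b B a b = 1.
Proof.
by case: B_in => _ col_sum _ _; rewrite -(col_sum a); apply: eq_bigr => b _; rewrite Cset_sym.
Qed.

Lemma off_group_mass_ge0 a : 0 <= off_group_mass k B a.
Proof. by case: B_in => _ _ B_ge0 _; apply: sumr_ge0 => b _. Qed.

Lemma in_group_spread_ge0 a : 0 <= in_group_spread k B a.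
Proof.
case: B_in => B_psd _ _ _; apply: sumr_ge0 => b _.
by rewrite divr_ge0 // subr_ge0 psd_midpoint.
Qed.

Lemma Cset_diag_deficit : nonempty_groups k -> \sum_a ((group_size R k a)^-1 - B a a) = 0.
Proof.
by case: B_in => _ _ _ trB k_onto; rewrite sumrB sum_inv_group_size // -trB subrr.
Qed.

Lemma cross_gap (C : 'M[R]_K) : C^T = C ->
  \sum_a \sum_b C (k a) (k b) * (Bstar R k a b - B a b) =
  \sum_a \sum_(b | k b != k a) cdist C (k a) (k b) / 2 * B a b.
Proof.
move=> C_sym; have Csym j l : C j l = C l j by rewrite -{1}C_sym mxE.
pose P := \sum_a \sum_b (C (k a) (k a) - C (k a) (k b)) * B a b.
transitivity P.
  apply: eq_bigr => a _; under eq_bigr do rewrite mulrBr.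
  rewrite sumrB sum_Bstar_row -[C _ _ in LHS]mulr1.
  by rewrite -(Cset_row_sum a) mulr_sumr -sumrB; apply: eq_bigr => b _; rewrite mulrBl.
have P_swap : P = \sum_a \sum_b (C (k b) (k b) - C (k a) (k b)) * B a b.
  by rewrite /P exchange_big; apply: eq_bigr => a _; apply: eq_bigr => b _;
     rewrite Cset_sym Csym.
transitivity ((P + P) / 2); first by field.
rewrite {2}P_swap /P -big_split mulr_suml; apply: eq_bigr => a _.
rewrite -big_split mulr_suml (bigID (fun b => k b == k a)) /= big1 ?add0r => [|b /eqP ->].
  by apply: eq_bigr => b _; rewrite /cdist; field.
by rewrite !subrr; field.
Qed.

Lemma diag_gap (g : 'I_K -> R) (c w : R) :
  nonempty_groups k -> (forall a, 0 <= c - g (k a) <= w * group_size R k a) ->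
  - \sum_a w * off_group_mass k B a <= \sum_a g (k a) * (Bstar R k a a - B a a).
Proof.
move=> k_onto g_bounds.
have shift : \sum_a g (k a) * (Bstar R k a a - B a a) =
             \sum_a (g (k a) - c) * ((group_size R k a)^-1 - B a a).
  rewrite [RHS](eq_bigr (fun a => g (k a) * (Bstar R k a a - B a a)
                                   - c * ((group_size R k a)^-1 - B a a))).
    by rewrite sumrB -mulr_sumr Cset_diag_deficit // mulr0 subr0.
  by move=> a _; rewrite BstarE eqxx mulrBl.
rewrite shift (deficit_by_group k Cset_row_sum (fun j => g j - c)) -sumrN.
apply: ler_sum => a _; rewrite -opprB.
apply: gap_term_bound; [exact: off_group_mass_ge0 | exact: in_group_spread_ge0 |
                       exact: group_size_gt0 | exact: g_bounds].
Qed.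

Lemma in_group_spread_eq0_of_block_diag : nonempty_groups k ->
  (forall a b, k a != k b -> B a b = 0) -> forall a, in_group_spread k B a = 0.
Proof.
move=> k_onto B_block.
have off0 := off_group_mass_block_diag B_block.
have sum0 : \sum_a in_group_spread k B a / group_size R k a = 0.
  apply/eqP; rewrite -oppr_eq0; apply/eqP.
  transitivity (\sum_a 1 * ((off_group_mass k B a - in_group_spread k B a) / group_size R k a)).
    by rewrite -sumrN; apply: eq_bigr => a _; rewrite off0 mul1r sub0r mulNr.
  rewrite -(deficit_by_group k Cset_row_sum (fun _ => 1)).
  by under eq_bigr do rewrite mul1r; rewrite Cset_diag_deficit.
move=> a; have /eqP := psumr_eq0P (fun a _ => divr_ge0 (in_group_spread_ge0 a)
                                   (ltW (group_size_gt0 R k a))) sum0 (i := a) isT.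
by rewrite mulf_eq0 invr_eq0 (negbTE (group_size_neq0 R k a)) orbF => /eqP.
Qed.

Lemma Cset_block_diag_eq_Bstar : nonempty_groups k ->
  (forall a b, k a != k b -> B a b = 0) -> B = Bstar R k.
Proof.
move=> k_onto B_block.
have spread0 := in_group_spread_eq0_of_block_diag k_onto B_block.
have mid a b : k b == k a -> B a b = (B a a + B b b) / 2.
  move=> ba; case: B_in => B_psd _ _ _.
  have term_ge0 c : 0 <= (B a a + B c c - 2 * B a c) / 2.
    by rewrite divr_ge0 // subr_ge0 psd_midpoint.
  have := psumr_eq0P (fun c _ => term_ge0 c) (spread0 a) (i := b) ba; lra.
have row a : group_size R k a * B a a + \sum_(b | k b == k a) B b b = 2.
  have := in_group_spreadE k Cset_row_sum a.
  rewrite spread0 off_group_mass_block_diag //; lra.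
have diag_const a b : k a = k b -> B a a = B b b.
  move=> ab; have := row a; rewrite -(row b) /group_size ab => /addIr.
  exact/mulfI/group_size_neq0.
have diag a : B a a = (group_size R k a)^-1.
  have := row a; rewrite (eq_bigr (fun _ => B a a)) => [|b /eqP]; last exact: diag_const.
  rewrite sum_group_const; move: (group_size_neq0 R k a); rewrite /group_size.
  by move: (_%:R) => n n0 H; apply: (mulfI n0); rewrite mulfV //; lra.
apply/matrixP => a b; rewrite BstarE; case: eqP => [ab | /eqP ab]; last exact: B_block.
by rewrite mid ?ab // (diag_const b a (esym ab)) diag mulrDl -splitr.
Qed.

Lemma frob_Sigma_gap (C : 'M[R]_K) (g : 'I_K -> R) (c w : R) :
  nonempty_groups k -> C^T = C ->
  (forall a, 0 <= c - g (k a) <= w * group_size R k a) ->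
  \sum_a \sum_(b | k b != k a) (cdist C (k a) (k b) / 2 - w) * B a b <=
  frob (Sigma_mx k C g) (Bstar R k) - frob (Sigma_mx k C g) B.
Proof.
move=> k_onto C_sym g_bounds.
have -> : frob (Sigma_mx k C g) (Bstar R k) - frob (Sigma_mx k C g) B =
    \sum_a \sum_b C (k a) (k b) * (Bstar R k a b - B a b)
    + \sum_a g (k a) * (Bstar R k a a - B a a).
  rewrite !frob_Sigma opprD addrACA -!sumrB; congr (_ + _); apply: eq_bigr => a _.
    by rewrite -sumrB; apply: eq_bigr => b _; rewrite mulrBr.
  by rewrite mulrBr.
have -> : \sum_a \sum_(b | k b != k a) (cdist C (k a) (k b) / 2 - w) * B a b =
    \sum_a \sum_(b | k b != k a) cdist C (k a) (k b) / 2 * B a b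
    - \sum_a w * off_group_mass k B a.
  rewrite -sumrB; apply: eq_bigr => a _; rewrite mulr_sumr -sumrB.
  by apply: eq_bigr => b _; rewrite mulrBl.
by rewrite cross_gap // lerD2l; apply: diag_gap.
Qed.

End Admissible.

Lemma Bstar_unique_maximizer (R : realFieldType) p K (k : 'I_p -> 'I_K)
    (C : 'M[R]_K) (g : 'I_K -> R) (c w : R) :
  nonempty_groups k -> C^T = C ->
  (forall a, 0 <= c - g (k a) <= w * group_size R k a) ->
  (forall j l, j != l -> 2 * w < cdist C j l) ->
  unique_maximizer K (Sigma_mx k C g) (Bstar R k).
Proof.
move=> k_onto C_sym g_bounds C_sep; split=> [|B B_in B_neq]; first exact: Bstar_in_Cset.
have coef_gt0 a b : k b != k a -> 0 < cdist C (k a) (k b) / 2 - w.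
  by move=> ba; rewrite subr_gt0 ltr_pdivlMr // mulrC C_sep // eq_sym.
have term_ge0 a b : k b != k a -> 0 <= (cdist C (k a) (k b) / 2 - w) * B a b.
  by case: B_in => _ _ B_ge0 _ ba; rewrite mulr_ge0 // ltW // coef_gt0.
rewrite -subr_gt0; apply: lt_le_trans (frob_Sigma_gap B_in k_onto C_sym g_bounds).
rewrite lt_def; apply/andP; split; last first.
  by apply: sumr_ge0 => a _; apply: sumr_ge0 => b; apply: term_ge0.
apply: contra_notN B_neq => /eqP gap0.
apply: (Cset_block_diag_eq_Bstar B_in k_onto) => a b ab; rewrite eq_sym in ab.
have /psumr_eq0P := psumr_eq0P (fun a _ => sumr_ge0 _ (term_ge0 a)) gap0 (i := a) isT.
move=> /(_ (term_ge0 a) b ab) /eqP.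
by rewrite mulf_eq0 gt_eqF ?coef_gt0 // => /eqP.
Qed.

Lemma Delta_gt_cdist (R : numDomainType) K (C : 'M[R]_K) t :
  C^T = C -> Delta_gt C t -> forall j l, j != l -> t < cdist C j l.
Proof.
move=> C_sym C_sep j l; case: (ltngtP j l) => [jl _ | lj _ | /val_inj ->].
- exact: C_sep.
- have Clj : C j l = C l j by rewrite -{1}C_sym mxE.
  by rewrite /cdist [C j j + _]addrC Clj; apply: C_sep.
- by rewrite eqxx.
Qed.

Theorem mainTheorem4 (R : realFieldType) (p K : nat) (k : 'I_p -> 'I_K)
  (C : 'M[R]_K) (gamma : 'I_K -> R) :
  nonempty_groups k ->
  sym_psd C ->
  (forall j, 0 <= gamma j) ->
  ((Delta_gt C (2 / (min_group_size k)%:R * diag_var (Gamma_mx k gamma)) ->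
      unique_maximizer K (Sigma_mx k C gamma) (Bstar R k))
   /\
   (Delta_gt C 0 ->
      unique_maximizer K (Sigma_mx k C gamma - Gamma_mx k gamma) (Bstar R k))).
Proof.
move=> k_onto [C_sym _] _; split=> [C_sep | C_sep].
- have [c c_bounds] := diag_var_bounds (Gamma_mx k gamma).
  set V := diag_var _ in c_bounds C_sep; set m := (min_group_size k)%:R in C_sep *.
  apply: (Bstar_unique_maximizer (c := c) (w := V / m)) => // [a | j l jl].
    have := c_bounds a; rewrite Gamma_mx_diag => /andP[lo hi].
    have /andP[m_gt0 m_le_n] := min_group_size_bounds k_onto a.
    have {}m_gt0 : 0 < m by rewrite ltr0n.
    have {}m_le_n : m <= group_size R k a by rewrite ler_nat.
    by rewrite subr_ge0 lo mulrAC ler_pdivlMr //; nra.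
  by rewrite mulrCA mulrC; apply: Delta_gt_cdist.
- rewrite Sigma_subGamma.
  apply: (Bstar_unique_maximizer (c := 0) (w := 0)) => // [a | j l jl].
    by rewrite subrr mul0r lexx.
  by rewrite mulr0; apply: Delta_gt_cdist.
Qed.
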